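(* Let $X$ be a nonempty shift space over a finite alphabet. Then: (1) $X$ is boundedly supermultiplicative if and only if there exist constants $c_1,c_2>0$ such that for every $n\ge1$, $$c_1\le\frac{2^{n h(X)}}{|\mathcal{B}_n(X)|}\le c_2.$$ Consequently, if $X$ is boundedly supermultiplicative, a probability measure on $X$ is a Gibbs state if and only if it is a Gibbs-like state. (2) If $X$ admits a Gibbs state, then $X$ is boundedly supermultiplicative; in particular, every Gibbs state on $X$ is a Gibbs-like state.
   Context: $\mathcal{B}_n(X)$ is the set of words of length $n$ appearing in points of $X$, $\mathcal{B}(X)=\bigcup_n\mathcal{B}_n(X)$, and $h(X)=\lim_{n}\frac1n\log|\mathcal{B}_n(X)|$ with $\log$ to base $2$. $X$ is boundedly supermultiplicative if there is $K\ge1$ with $|\mathcal{B}_m(X)|\cdot|\mathcal{B}_n(X)|\le K|\mathcal{B}_{m+n}(X)|$ for all $m,n\ge1$. For a word $\omega$, $[\omega]$ denotes the cylinder set of points of $X$ having $\omega$ at a fixed position. A (Borel) probability measure $\mu$ on $X$ is a Gibbs-like state if there exist $c_1,c_2>0$ such that for all $\omega\in\mathcal{B}(X)$ of length $r$, $c_1\le\mu([\omega])\,|\mathcal{B}_r(X)|\le c_2$; it is a Gibbs state if there exist $c_1,c_2>0$ such that for all $\omega\in\mathcal{B}(X)$ of length $r$, $c_1\le\mu([\omega])\,2^{r h(X)}\le c_2$. *)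

From HB Require Import structures.
From mathcomp Require Import all_boot all_order all_algebra.
From mathcomp Require Import all_classical all_reals.
From mathcomp Require Import topology normedtype sequences exp measure probability.
Set Implicit Arguments. Unset Strict Implicit. Unset Printing Implicit Defensive.
Import Order.TTheory GRing.Theory Num.Theory.
Import numFieldTopology.Exports numFieldNormedType.Exports.
Local Open Scope classical_set_scope.
Local Open Scope ring_scope.

(* A finite alphabet.  It is a finType; we also ask for a distinguished point,
   which is needed to build the measurable space of configurations
   (any alphabet of a nonempty shift space is nonempty). *)
HB.structure Definition FinPointed := {T of Finite T & isPointed T}.
Notation finPointedType := FinPointed.type.

Definition config (A : finPointedType) := int -> A.

Definition shift (A : finPointedType) (x : config A) : config A :=
  fun i => x (i + 1)%R.

(* X is closed in the product topology: a configuration all of whose central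
   windows x_[-n,n] are seen in points of X belongs to X. *)
Definition closed_config (A : finPointedType) (X : set (config A)) : Prop :=
  forall x : config A,
    (forall n : nat, exists y, X y /\ forall i : int, (`|i| <= n)%N -> y i = x i) ->
    X x.

Definition shift_space (A : finPointedType) (X : set (config A)) : Prop :=
  closed_config X /\ (@shift A) @` X = X.

Definition appears (A : finPointedType) (n : nat) (w : n.-tuple A) (x : config A) : Prop :=
  exists i : int, forall k : 'I_n, x (i + (k : nat)%:Z)%R = tnth w k.

Definition lang (A : finPointedType) (X : set (config A)) (n : nat) : {set n.-tuple A} :=
  [set w : n.-tuple A | `[< exists x, X x /\ appears w x >]].

Definition log2 (R : realType) (x : R) : R := ln x / ln 2.

Definition entropy (R : realType) (A : finPointedType) (X : set (config A)) : R :=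
  limn ((fun n : nat => log2 (#|lang X n|%:R : R) / n%:R) : nat -> R).

Definition bsm (R : realType) (A : finPointedType) (X : set (config A)) : Prop :=
  exists K : R, 1 <= K /\
    forall m n : nat, (0 < m)%N -> (0 < n)%N ->
      ((#|lang X m| * #|lang X n|)%:R : R) <= K * (#|lang X (m + n)|%:R).

Definition cyl_at (A : finPointedType) (n : nat) (i : int) (w : n.-tuple A) : set (config A) :=
  [set x | forall k : 'I_n, x (i + (k : nat)%:Z)%R = tnth w k].

Definition cylinders (A : finPointedType) : set (set (config A)) :=
  [set C | exists n i (w : n.-tuple A), C = cyl_at i w].

(* the measurable space of configurations: Borel sigma-algebra of the product
   topology, i.e. the sigma-algebra generated by cylinders *)
Definition configM (A : finPointedType) := g_sigma_algebraType (@cylinders A).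

Definition cyl (A : finPointedType) (X : set (config A)) (n : nat) (w : n.-tuple A)
  : set (configM A) := X `&` cyl_at 0 w.

Definition gibbs_like (R : realType) (A : finPointedType) (X : set (config A))
  (mu : probability (configM A) R) : Prop :=
  exists c1 c2 : R, 0 < c1 /\ 0 < c2 /\
    forall (r : nat) (w : r.-tuple A), (0 < r)%N -> w \in lang X r ->
      (c1%:E <= mu (cyl X w) * (#|lang X r|%:R)%:E <= c2%:E)%E.

Definition gibbs (R : realType) (A : finPointedType) (X : set (config A))
  (mu : probability (configM A) R) : Prop :=
  exists c1 c2 : R, 0 < c1 /\ 0 < c2 /\
    forall (r : nat) (w : r.-tuple A), (0 < r)%N -> w \in lang X r ->
      (c1%:E <= mu (cyl X w) * (2 `^ (r%:R * entropy R X))%:E <= c2%:E)%E.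

Definition on_X (R : realType) (A : finPointedType) (X : set (config A))
  (mu : probability (configM A) R) : Prop := mu (X : set (configM A)) = 1%E.

From HB Require Import structures.
From mathcomp Require Import all_boot all_order all_algebra.
From mathcomp Require Import all_classical all_reals.
From mathcomp Require Import topology normedtype sequences exp measure probability.
From mathcomp Require Import zify ring lra.
Import Order.TTheory GRing.Theory Num.Theory.
Import numFieldTopology.Exports numFieldNormedType.Exports.
Local Open Scope classical_set_scope.
Local Open Scope ring_scope.

(* Splitting words of length m + n shows that s_n := log2 |B_n(X)| is
   subadditive, and bounded supermultiplicativity says that it is also
   superadditive up to the constant log2 K.  A Fekete-type argument for such
   almost additive sequences gives |s_n - n h(X)| <= log2 K, i.e. a bounded
   ratio 2^(n h(X)) / |B_n(X)|; conversely, multiplicativity of 2^(n h(X))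
   turns a bounded ratio back into bounded supermultiplicativity.  A Gibbs
   state has cylinder masses comparable to 2^(-n h(X)); since the cylinders of
   the words of B_n(X) partition X, summing them shows |B_n(X)| is comparable to
   2^(n h(X)).  Under a bounded ratio the Gibbs and Gibbs-like conditions differ
   only by a bounded factor. *)

Section Words.
Context {A : finPointedType} {X : set (config A)}.

Definition window n (x : config A) (i : int) : n.-tuple A :=
  [tuple x (i + (k : nat)%:Z)%R | k < n].

Lemma window_lang n x : X x -> window n x 0 \in lang X n.
Proof.
move=> Xx; rewrite inE; apply/asboolP; exists x; split=> //; exists 0 => k.
by rewrite tnth_mktuple.
Qed.

Lemma card_lang_gt0 n : X !=set0 -> (0 < #|lang X n|)%N.
Proof. by case=> x Xx; apply/card_gt0P; exists (window n x 0); exact: window_lang. Qed.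

Lemma card_lang_addn m n : (#|lang X (m + n)| <= #|lang X m| * #|lang X n|)%N.
Proof.
pose split_word (w : (m + n).-tuple A) :=
  ([tuple tnth w (lshift n i) | i < m], [tuple tnth w (rshift m j) | j < n]).
have split_inj : injective split_word.
  move=> w1 w2 e; apply: eq_from_tnth => k.
  case: (splitP k) => [i ki | j kj].
  - have -> : k = lshift n i by apply: val_inj.
    by have := congr1 (fun p => tnth p.1 i) e; rewrite !tnth_mktuple.
  - have -> : k = rshift m j by apply: val_inj.
    by have := congr1 (fun p => tnth p.2 j) e; rewrite !tnth_mktuple.
rewrite -(card_imset (lang X (m + n)) split_inj) -cardsX.
apply: subset_leq_card; apply/fintype.subsetP => _ /imsetP [w + ->].
rewrite inE => /asboolP [x [Xx [i hi]]].
rewrite finset.in_setX !inE; apply/andP; split; apply/asboolP; exists x; split=> //.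
- by exists i => k; rewrite tnth_mktuple; exact: (hi (lshift n k)).
- exists (i + m%:Z)%R => k; rewrite tnth_mktuple -addrA -PoszD.
  exact: (hi (rshift m k)).
Qed.

Lemma measurable_cyl_at n i (w : n.-tuple A) :
  measurable (cyl_at i w : set (configM A)).
Proof. by apply: sub_sigma_algebra; exists n, i, w. Qed.

(* A closed X is the countable intersection over n of the finite unions of the
   central cylinders of width 2n+1 of its points. *)
Lemma measurable_closed_config : closed_config X -> measurable (X : set (configM A)).
Proof.
move=> cX.
pose S n := \bigcup_(w in [set window (n + n).+1 y (- n%:Z)%R | y in X])
              (cyl_at (- n%:Z)%R w : set (configM A)).
have -> : (X : set (configM A)) = \bigcap_(n in setT) S n.
  apply/seteqP; split.
  - move=> x Xx n _; exists (window (n + n).+1 x (- n%:Z)%R); first by exists x.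
    by move=> k; rewrite tnth_mktuple.
  - move=> x hx; apply: cX => n.
    have [_ [y Xy <-] hxy] := hx n I.
    exists y; split=> // i hi.
    have hk : (absz (i + n%:Z)%R < (n + n).+1)%N by lia.
    have := hxy (Ordinal hk); rewrite tnth_mktuple /=.
    by have -> : (- n%:Z + (absz (i + n%:Z)%R)%:Z)%R = i by lia.
apply: bigcap_measurable; first by exists 0.
move=> n _; apply: fin_bigcup_measurable; first exact: finite_finset.
by move=> w _; exact: measurable_cyl_at.
Qed.

End Words.

Section AlmostAdditive.
Context {R : realType} {s : nat -> R} {c : R}.
Hypothesis c_ge0 : 0 <= c.
Hypothesis s_subadd : forall m n, s (m + n)%N <= s m + s n.
Hypothesis s_almost_superadd :
  forall m n, (0 < m)%N -> (0 < n)%N -> s m + s n <= c + s (m + n)%N.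

Lemma subadditive_mulnl k m : s (k.+1 * m)%N <= k.+1%:R * s m.
Proof.
elim: k => [|k IH]; first by rewrite mul1r mul1n.
rewrite mulSn -(addn1 k.+1) natrD mulrDl mul1r.
by have := s_subadd m (k.+1 * m)%N; lra.
Qed.

Lemma almost_superadditive_mulnl k n :
  (0 < n)%N -> k.+1%:R * (s n - c) <= s (k.+1 * n)%N - c.
Proof.
move=> n_gt0; elim: k => [|k IH]; first by rewrite mul1r mul1n.
rewrite mulSn -(addn1 k.+1) natrD mulrDl mul1r.
have kn_gt0 : (0 < k.+1 * n)%N by rewrite muln_gt0 n_gt0.
by have := s_almost_superadd _ _ n_gt0 kn_gt0; lra.
Qed.

(* Compare both sides at the common length m * n. *)
Lemma almost_additive_avg_le m n :
  (0 < m)%N -> (0 < n)%N -> (s n - c) / n%:R <= (s m + c) / m%:R.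
Proof.
case: m => // m _; case: n => // n _.
rewrite ler_pdivlMr // mulrAC ler_pdivrMr //.
have lo := almost_superadditive_mulnl m n.+1 (ltn0Sn n).
have hi := subadditive_mulnl n m.+1.
rewrite mulnC in lo.
have nc_ge0 : 0 <= n.+1%:R * c by rewrite mulr_ge0.
rewrite mulrC [_ * n.+1%:R]mulrC [n.+1%:R * _]mulrDr.
by move: c_ge0; lra.
Qed.

Lemma almost_additive_linear :
  exists L, forall n, (0 < n)%N -> s n - c <= n%:R * L <= s n + c.
Proof.
pose E := [set (s n - c) / n%:R | n in [set n | (0 < n)%N]].
have E_neq0 : E !=set0 by exists ((s 1 - c) / 1%:R), 1%N.
have E_ub : has_ubound E.
  by exists ((s 1 + c) / 1%:R) => _ [n n_gt0 <-]; exact: almost_additive_avg_le.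
exists (sup E) => n n_gt0.
have lo : (s n - c) / n%:R <= sup E by apply: ub_le_sup => //; exists n.
have hi : sup E <= (s n + c) / n%:R.
  by apply: ge_sup => // _ [m m_gt0 <-]; exact: almost_additive_avg_le.
move: lo hi; rewrite ler_pdivrMr ?ltr0n // ler_pdivlMr ?ltr0n // => lo hi.
by rewrite [_ * sup E]mulrC lo hi.
Qed.

End AlmostAdditive.

Lemma cvg_avg_linear_approx {R : realType} {s : nat -> R} {c L : R} :
  (forall n, (0 < n)%N -> s n - c <= n%:R * L <= s n + c) ->
  (fun n => s n / n%:R) @ \oo --> L.
Proof.
move=> approx; apply/cvgrPdist_le => e e_gt0.
exists (Num.truncn (c / e)).+1 => // n /= hn.
have n_gt0 : (0 < n)%N by apply: leq_trans hn.
have n_gt0' : 0 < n%:R :> R by rewrite ltr0n.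
have -> : L - s n / n%:R = (n%:R * L - s n) / n%:R.
  by rewrite mulrBl [n%:R * L]mulrC mulfK ?gt_eqF.
rewrite normrM normfV (gtr0_norm n_gt0') ler_pdivrMr //.
have dev_le : `|n%:R * L - s n| <= c by rewrite ler_norml; have := approx n n_gt0; lra.
apply: (le_trans dev_le).
have : c / e < n%:R by apply: (lt_le_trans (truncnS_gt _)); rewrite ler_nat.
by rewrite ltr_pdivrMr // => /ltW; rewrite mulrC.
Qed.

Section Log2.
Context {R : realType}.

Lemma ln2_gt0 : 0 < ln (2 : R).
Proof. by apply: ln_gt0; rewrite ltr1n. Qed.

Lemma log2M (x y : R) : 0 < x -> 0 < y -> log2 (x * y) = log2 x + log2 y.
Proof. by move=> x_gt0 y_gt0; rewrite /log2 lnM ?posrE // mulrDl. Qed.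

Lemma ler_log2 (x y : R) : 0 < x -> 0 < y -> x <= y -> log2 x <= log2 y.
Proof.
move=> x_gt0 y_gt0 xy; rewrite /log2 ler_pM2r ?invr_gt0 ?ln2_gt0 //.
by rewrite ler_ln ?posrE.
Qed.

Lemma log2K (x : R) : 0 < x -> 2 `^ (log2 x) = x.
Proof.
move=> x_gt0; rewrite /powR pnatr_eq0 /log2 divfK ?gt_eqF ?ln2_gt0 //.
by rewrite lnK ?posrE.
Qed.

Lemma powR2D (r t : R) : 2 `^ (r + t) = 2 `^ r * 2 `^ t.
Proof. by apply: powRD; rewrite pnatr_eq0 implybT. Qed.

Lemma powR2_div_bounds (b c t : R) : 0 < b ->
  log2 b - c <= t <= log2 b + c -> 2 `^ (- c) <= 2 `^ t / b <= 2 `^ c.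
Proof.
move=> b_gt0 /andP[lo hi].
rewrite -(log2K b b_gt0) -powRB ?pnatr_eq0 ?implybT //.
by apply/andP; split; apply: ler_powR; rewrite ?ler1n //; lra.
Qed.

End Log2.

Section BoundsTransfer.
Context {R : realType}.

Lemma mul_bounds (x q c1 c2 d1 d2 : R) : 0 < c1 -> 0 < d1 ->
  c1 <= x <= c2 -> d1 <= q <= d2 -> c1 * d1 <= x * q <= c2 * d2.
Proof.
move=> c1_gt0 d1_gt0 /andP[x_lo x_hi] /andP[q_lo q_hi].
have x_ge0 : 0 <= x by apply: le_trans x_lo; exact: ltW.
have q_ge0 : 0 <= q by apply: le_trans q_lo; exact: ltW.
by rewrite !ler_pM ?(ltW c1_gt0) ?(ltW d1_gt0).
Qed.

Lemma div_bounds (x q c1 c2 d1 d2 : R) : 0 < c1 -> 0 < d1 ->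
  c1 <= x <= c2 -> d1 <= q <= d2 -> c1 / d2 <= x / q <= c2 / d1.
Proof.
move=> c1_gt0 d1_gt0 x_bd /andP[q_lo q_hi].
have q_gt0 : 0 < q by apply: lt_le_trans q_lo.
apply: mul_bounds => //; first by rewrite invr_gt0; apply: lt_le_trans q_hi.
by rewrite !lef_pV2 ?posrE ?q_lo ?q_hi //; apply: lt_le_trans q_hi.
Qed.

End BoundsTransfer.

Section Entropy.
Context {R : realType} {A : finPointedType} {X : set (config A)}.
Hypothesis X_neq0 : X !=set0.

Local Notation b n := (#|lang X n|%:R : R).
Local Notation P n := (2 `^ (n%:R * entropy R X) : R).

Definition bounded_entropy_ratio := exists c1 c2 : R, 0 < c1 /\ 0 < c2 /\
  forall n : nat, (0 < n)%N -> c1 <= P n / b n <= c2.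

Lemma card_lang_gt0R n : 0 < b n.
Proof. by rewrite ltr0n; exact: card_lang_gt0. Qed.

Lemma pow_entropy_gt0 n : 0 < P n.
Proof. by apply: powR_gt0; rewrite ltr0n. Qed.

Lemma bounded_entropy_ratio_bsm : bounded_entropy_ratio -> bsm R X.
Proof.
move=> [c1 [c2 [c1_gt0 [c2_gt0 ratio]]]].
have lo k : (0 < k)%N -> c1 * b k <= P k.
  by move=> k_gt0; have /andP[+ _] := ratio k k_gt0; rewrite ler_pdivlMr ?card_lang_gt0R.
have hi k : (0 < k)%N -> P k <= c2 * b k.
  by move=> k_gt0; have /andP[_ +] := ratio k k_gt0; rewrite ler_pdivrMr ?card_lang_gt0R.
exists (1 + c2 / (c1 * c1)); split.
  by rewrite lerDl divr_ge0 ?mulr_ge0 ?ltW.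
move=> m n m_gt0 n_gt0.
have PD : P (m + n)%N = P m * P n by rewrite natrD mulrDl powR2D.
have prod_le : c1 * b m * (c1 * b n) <= P (m + n)%N.
  by rewrite PD ler_pM ?lo ?mulr_ge0 ?ltW ?card_lang_gt0R.
have : b m * b n <= c2 / (c1 * c1) * b (m + n)%N.
  rewrite mulrAC ler_pdivlMr ?mulr_gt0 //.
  apply: le_trans (hi _ _); last by rewrite addn_gt0 m_gt0.
  by apply: le_trans prod_le; rewrite [leRHS]mulrACA [leRHS]mulrC lexx.
rewrite natrM => /le_trans; apply.
by rewrite mulrDl mul1r lerDr ltW ?card_lang_gt0R.
Qed.

Lemma bsm_bounded_entropy_ratio : bsm R X -> bounded_entropy_ratio.
Proof.
move=> [K [K_ge1 bsmK]].
have K_gt0 : 0 < K by apply: lt_le_trans K_ge1.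
pose s n := log2 (b n).
have logK_ge0 : 0 <= log2 K by apply: divr_ge0; [exact: ln_ge0 | exact: ltW ln2_gt0].
have s_subadd m n : s (m + n)%N <= s m + s n.
  rewrite /s -log2M ?card_lang_gt0R // ler_log2 ?mulr_gt0 ?card_lang_gt0R //.
  by rewrite -natrM ler_nat card_lang_addn.
have s_almost_superadd m n :
    (0 < m)%N -> (0 < n)%N -> s m + s n <= log2 K + s (m + n)%N.
  move=> m_gt0 n_gt0; rewrite /s -!log2M ?card_lang_gt0R //.
  by rewrite ler_log2 ?mulr_gt0 ?card_lang_gt0R // -natrM bsmK.
have [L approx] := almost_additive_linear logK_ge0 s_subadd s_almost_superadd.
have entropyE : entropy R X = L by apply: cvg_lim => //; exact: cvg_avg_linear_approx approx.
exists (2 `^ (- log2 K)), (2 `^ log2 K).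
split; first by rewrite powR_gt0.
split=> [|n n_gt0]; first by rewrite powR_gt0.
by rewrite entropyE powR2_div_bounds ?card_lang_gt0R ?approx.
Qed.

Section Measure.
Variable mu : probability (configM A) R.
Hypothesis X_closed : closed_config X.

Lemma measurable_cyl {n} (w : n.-tuple A) : measurable (cyl X w).
Proof.
by apply: measurableI; [exact: measurable_closed_config | exact: measurable_cyl_at].
Qed.

Definition cyl_mass {n} (w : n.-tuple A) : R := fine (mu (cyl X w)).

Lemma cyl_massE n (w : n.-tuple A) : mu (cyl X w) = (cyl_mass w)%:E.
Proof.
rewrite /cyl_mass fineK // ge0_fin_numE ?measure_ge0 //.
exact: le_lt_trans (probability_le1 _ (measurable_cyl w)) (ltry _).
Qed.

Lemma sum_cyl_mass n : on_X X mu -> \sum_(w in lang X n) cyl_mass w = 1.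
Proof.
move=> muX.
pose D := [set` enum (lang X n)].
have X_cover : (X : set (configM A)) = \bigcup_(w in D) cyl X w.
  apply/seteqP; split; last by move=> x [w _ []].
  move=> x Xx; exists (window n x 0); first by rewrite /D /= mem_enum window_lang.
  by split=> // k; rewrite tnth_mktuple.
have cyl_disj : trivIset D (fun w => cyl X w).
  move=> w1 w2 _ _ [x [[_ h1] [_ h2]]]; apply: eq_from_tnth => k.
  by rewrite -h1 -h2.
have := measure_fin_bigcup mu finite_finset cyl_disj (fun w _ => measurable_cyl w).
rewrite -X_cover => /(etrans (esym muX)).
rewrite -fsbig_seq ?enum_uniq // big_enum /=.
under eq_bigr do rewrite cyl_massE.
by rewrite sumEFin => -[].
Qed.

Lemma gibbs_bounded_entropy_ratio : on_X X mu -> gibbs X mu -> bounded_entropy_ratio.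
Proof.
move=> muX [c1 [c2 [c1_gt0 [c2_gt0 hg]]]].
exists c1, c2; do 2 split => //; move=> n n_gt0.
have mass_bd w : w \in lang X n -> c1 <= cyl_mass w * P n <= c2.
  by move=> wX; have := hg n w n_gt0 wX; rewrite cyl_massE -EFinM !lee_fin.
have sumP : \sum_(w in lang X n) cyl_mass w * P n = P n.
  by rewrite -mulr_suml sum_cyl_mass // mul1r.
rewrite ler_pdivlMr ?ler_pdivrMr ?card_lang_gt0R // -sumP.
rewrite !mulr_natr -!sumr_const.
by apply/andP; split; apply: ler_sum => w wX; have /andP[] := mass_bd w wX.
Qed.

Lemma bounded_entropy_ratio_gibbsP :
  bounded_entropy_ratio -> (gibbs X mu <-> gibbs_like X mu).
Proof.
move=> [d1 [d2 [d1_gt0 [d2_gt0 ratio]]]].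
have massE r (w : r.-tuple A) : cyl_mass w * P r = cyl_mass w * b r * (P r / b r).
  by field; rewrite gt_eqF ?card_lang_gt0R.
have massE' r (w : r.-tuple A) : cyl_mass w * b r = cyl_mass w * P r / (P r / b r).
  by field; rewrite !gt_eqF ?card_lang_gt0R ?pow_entropy_gt0.
split=> -[c1 [c2 [c1_gt0 [c2_gt0 hg]]]].
- exists (c1 / d2), (c2 / d1); split; [exact: divr_gt0 | split; [exact: divr_gt0 |]].
  move=> r w r_gt0 wX; have := hg r w r_gt0 wX.
  rewrite !cyl_massE -!EFinM !lee_fin massE' => gibbs_bd.
  by apply: div_bounds => //; exact: ratio.
- exists (c1 * d1), (c2 * d2); split; [exact: mulr_gt0 | split; [exact: mulr_gt0 |]].
  move=> r w r_gt0 wX; have := hg r w r_gt0 wX.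
  rewrite !cyl_massE -!EFinM !lee_fin massE => like_bd.
  by apply: mul_bounds => //; exact: ratio.
Qed.

End Measure.

End Entropy.

Theorem proposition3p13 (R : realType) (A : finPointedType) (X : set (config A)) :
  shift_space X -> X !=set0 ->
  (* (1) *)
  (bsm R X <->
     exists c1 c2 : R, 0 < c1 /\ 0 < c2 /\
       forall n : nat, (0 < n)%N ->
         c1 <= 2 `^ (n%:R * entropy R X) / (#|lang X n|%:R) <= c2) /\
  (bsm R X ->
     forall mu : probability (configM A) R, on_X X mu ->
       (gibbs X mu <-> gibbs_like X mu)) /\
  (* (2) *)
  ((exists mu : probability (configM A) R, on_X X mu /\ gibbs X mu) -> bsm R X) /\
  (forall mu : probability (configM A) R, on_X X mu -> gibbs X mu -> gibbs_like X mu).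
Proof.
move=> [X_closed _] X_neq0.
have bsm_ratio := bsm_bounded_entropy_ratio (R := R) X_neq0.
have ratio_bsm := bounded_entropy_ratio_bsm (R := R) X_neq0.
have gibbs_ratio := gibbs_bounded_entropy_ratio (R := R) X_neq0 ^~ X_closed.
have ratio_gibbsP := bounded_entropy_ratio_gibbsP (R := R) X_neq0 ^~ X_closed.
split; first by split; [exact: bsm_ratio | exact: ratio_bsm].
split; first by move=> /bsm_ratio ratio mu _; exact: ratio_gibbsP.
split; first by move=> [mu [muX mu_gibbs]]; exact: ratio_bsm (gibbs_ratio mu muX mu_gibbs).
by move=> mu muX mu_gibbs; apply/(ratio_gibbsP mu (gibbs_ratio mu muX mu_gibbs)).
Qed.
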